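(* Let $G\subset\mathbb R^r$ be a lattice of rank $r$ acting on $C(\mathbb R^r)$ by $f^g(x)=f(x+g)$. (a) For every $n\in\mathbb Z_+$ and every $G$-periodic monomial $Q_m$ of degree $m\le n$, $D^{n+1}Q_m=0$. (b) Let $n\ge1$ and $Q_n=x_{i_1}\cdots x_{i_n}=x_1^{j_1}\cdots x_r^{j_r}$ with $1\le i_1,\dots,i_n\le r$, $j_1+\dots+j_r=n$, each $x_k$ appearing exactly $j_k$ times. For $g_1,\dots,g_n\in G$ write $g_i=\sum_{k=1}^rg_{i,k}\mathbf e_k$ in the standard basis $\mathbf e_1,\dots,\mathbf e_r$ of $\mathbb R^r$. Then $[D^nQ_n](g_1,\dots,g_n)$ is the constant function $$\sum_{(s_1,\dots,s_n)\in\mathbf S(n)}g_{1,i_{s_1}}g_{2,i_{s_2}}\cdots g_{n,i_{s_n}}=j_1!\cdots j_r!\sum_{\boldsymbol\kappa}g_{1,k_1}g_{2,k_2}\cdots g_{n,k_n},$$ where $\mathbf S(n)$ is the set of permutations of $\{1,\dots,n\}$ and $\boldsymbol\kappa=(k_1,\dots,k_n)$ runs over all sequences of length $n$ containing each index $k\in\{1,\dots,r\}$ exactly $j_k$ times.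
   Context: $C(\mathbb R^r)$ is the algebra of continuous (real or complex) functions on $\mathbb R^r$, and $x_1,\dots,x_r$ are the standard coordinates. A function is $G$-periodic if $f(x+g)=f(x)$ for all $g\in G$. A $G$-periodic monomial of degree $m$ is a function $f(x)\,x_{i_1}\cdots x_{i_m}$ with $f\ne0$ continuous and $G$-periodic. For a group $G$ acting on a space $A$ by $f\mapsto f^g$: $\mathcal C^0(G,A)=A$; for $n\ge1$, $\mathcal C^n(G,A)$ is the space of functions $G^n\to A$ vanishing whenever some argument is $0\in G$; $(d_nc)(g_1,\dots,g_n)=[c(g_1,\dots,g_{n-1})]^{g_n}-c(g_1,\dots,g_{n-1})$; $D^0=\mathrm{id}$, $D^n=d_nD^{n-1}$. *)

From HB Require Import structures.
From mathcomp Require Import all_boot all_order all_fingroup all_algebra.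
From mathcomp Require Import all_classical all_reals all_analysis.
Import numFieldNormedType.Exports.
Set Implicit Arguments. Unset Strict Implicit. Unset Printing Implicit Defensive.
Import Order.TTheory GRing.Theory Num.Theory.
Local Open Scope ring_scope.

(* Points of R^r are row vectors 'rV[R]_r; coordinate x_k (k : 'I_r) is x 0 k. *)

Definition is_lattice (R : realType) (r : nat) (G : set 'rV[R]_r) : Prop :=
  exists B : 'M[R]_r, B \in unitmx /\
    forall v : 'rV[R]_r,
      G v <-> exists z : 'rV[int]_r, v = map_mx (fun a : int => a%:~R) z *m B.

Definition Gperiodic (R : realType) (r : nat) (G : set 'rV[R]_r)
  (f : 'rV[R]_r -> R) : Prop :=
  forall g, G g -> forall x, f (x + g) = f x.

Definition act (R : realType) (r : nat) (g : 'rV[R]_r) (f : 'rV[R]_r -> R)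
  : 'rV[R]_r -> R := fun x => f (x + g).

Definition cochain (R : realType) (r n : nat) :=
  ('I_n -> 'rV[R]_r) -> ('rV[R]_r -> R).

Definition dco (R : realType) (r n : nat) (c : cochain R r n) : cochain R r n.+1 :=
  fun gs x =>
    act (gs ord_max) (c (fun i : 'I_n => gs (widen_ord (leqnSn n) i))) x
    - c (fun i : 'I_n => gs (widen_ord (leqnSn n) i)) x.

Fixpoint Dco (R : realType) (r n : nat) (f : 'rV[R]_r -> R) : cochain R r n :=
  match n with
  | 0 => fun _ => f
  | n'.+1 => @dco R r n' (@Dco R r n' f)
  end.

From HB Require Import structures.
From mathcomp Require Import all_boot all_order all_fingroup all_algebra.
From mathcomp Require Import all_classical all_reals all_analysis.
From mathcomp Require Import ring zify.
Import numFieldNormedType.Exports.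
Import Order.TTheory GRing.Theory Num.Theory.
Local Open Scope ring_scope.
Set Implicit Arguments. Unset Strict Implicit. Unset Printing Implicit Defensive.

(* D^n is an iterated finite difference, and x |-> x_a is additive, so a Leibniz
   rule expresses D^(n+1) (h * x_a) (g_1, ..., g_(n+1)) through x_a * D^(n+1) h and
   the values of D^n h on the n-tuples obtained by dropping one g_j, weighted by
   g_(j,a).  By induction, D^n of a monomial x_(i_1) ... x_(i_n) is the permanent
   of the matrix (g_(l,i_k)), a constant, so every further difference vanishes;
   (a) follows after pulling the periodic factor f out of D.  For the second
   formula of (b), group the permutations s by kappa = i o s: exactly
   j_1! ... j_r! permutations produce each kappa with the multiplicities of i,
   and none produce any other kappa. *)

Lemma lift_lift_max n (j : 'I_n.+1) : lift (lift ord_max j) ord_max = ord_max.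
Proof. by apply: val_inj; rewrite /= /bump; have := ltn_ord j; lia. Qed.

Lemma comp_lift_lift_max (T : Type) n (gs : 'I_n.+2 -> T) (j : 'I_n.+1) :
  (gs \o lift (lift ord_max j)) \o lift ord_max = (gs \o lift ord_max) \o lift j.
Proof.
apply/funext => l; congr gs; apply: val_inj; rewrite /= /bump.
by have := ltn_ord j; have := ltn_ord l; lia.
Qed.

Section UnliftPerm.
Variables (n : nat) (i0 : 'I_n.+1).
Implicit Types (s : 'S_n.+1) (k : 'I_n).

Definition unlift_perm_fun (s : 'S_n.+1) (k : 'I_n) : 'I_n :=
  odflt k (unlift (s i0) (s (lift i0 k))).

Lemma lift_unlift_perm_fun s k : lift (s i0) (unlift_perm_fun s k) = s (lift i0 k).
Proof.
rewrite /unlift_perm_fun; case: unliftP => [k' -> // | /perm_inj/eqP].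
by rewrite eq_sym (negbTE (neq_lift _ _)).
Qed.

Lemma unlift_perm_fun_inj s : injective (unlift_perm_fun s).
Proof.
move=> k1 k2 /(congr1 (lift (s i0))).
by rewrite !lift_unlift_perm_fun => /perm_inj/lift_inj.
Qed.

Definition unlift_perm s : 'S_n := perm (@unlift_perm_fun_inj s).

Lemma unlift_lift_perm j0 (s : 'S_n) : unlift_perm (lift_perm i0 j0 s) = s.
Proof.
apply/permP => k.
by rewrite permE /unlift_perm_fun lift_perm_id lift_perm_lift liftK.
Qed.

Lemma lift_unlift_perm j0 s : s i0 = j0 -> lift_perm i0 j0 (unlift_perm s) = s.
Proof.
move=> si0; apply/permP => k; case: (unliftP i0 k) => [k'|] ->.
  by rewrite lift_perm_lift permE -si0 lift_unlift_perm_fun.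
by rewrite lift_perm_id si0.
Qed.

Lemma big_lift_perm (V : Type) (idx : V) (op : Monoid.com_law idx) j0
    (F : 'S_n.+1 -> V) :
  \big[op/idx]_(s : 'S_n.+1 | s i0 == j0) F s =
  \big[op/idx]_(s : 'S_n) F (lift_perm i0 j0 s).
Proof.
rewrite (reindex (lift_perm i0 j0)) /=.
  by apply: eq_bigl => s; rewrite lift_perm_id eqxx.
exists unlift_perm => [s _ | s /eqP si0]; first exact: unlift_lift_perm.
exact: lift_unlift_perm.
Qed.

End UnliftPerm.

Definition permanent (R : pzSemiRingType) n (A : 'M[R]_n) : R :=
  \sum_(s : 'S_n) \prod_i A i (s i).

Lemma permanent_mxE (R : pzSemiRingType) n (E : 'I_n -> 'I_n -> R) :
  permanent (\matrix_(i, j) E i j) = \sum_(s : 'S_n) \prod_i E i (s i).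
Proof. by apply: eq_bigr => s _; apply: eq_bigr => i _; rewrite mxE. Qed.

Lemma expand_permanent_col (R : comPzSemiRingType) n (A : 'M[R]_n.+1) j0 :
  permanent A = \sum_i A i j0 * permanent (row' i (col' j0 A)).
Proof.
rewrite /permanent (partition_big (fun s : 'S_n.+1 => (s^-1)%g j0) xpredT) //=.
apply: eq_bigr => i _; rewrite big_distrr /=.
rewrite (eq_bigl (fun s : 'S_n.+1 => s i == j0)); last first.
  by move=> s; apply/eqP/eqP => [<- | <-]; rewrite ?permKV ?permK.
rewrite big_lift_perm; apply: eq_bigr => s _.
rewrite (bigD1_ord i) //= lift_perm_id; congr (_ * _).
by apply: eq_bigr => k _; rewrite !mxE lift_perm_lift.
Qed.

Section Rearrangements.
Variable T : finType.

(* [multiplicity i k] is the exponent j_k of x_k in x_(i 0) * ... * x_(i (n-1)). *)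
Definition multiplicity n (i : 'I_n -> T) (a : T) : nat := #|[set l | i l == a]|.

Lemma multiplicity_lift n (i : 'I_n.+1 -> T) m a :
  multiplicity i a = ((i m == a) + multiplicity (i \o lift m) a)%N.
Proof.
have cardE n' (i' : 'I_n' -> T) : multiplicity i' a = (\sum_l (i' l == a))%N.
  by rewrite /multiplicity -sum1_card big_mkcond; apply: eq_bigr => l _; rewrite inE.
by rewrite !cardE (bigD1_ord m).
Qed.

Lemma prod_factS (e : T -> nat) b : (0 < e b)%N ->
  (\prod_a (e a)`! = e b * \prod_a (e a - (a == b))`!)%N.
Proof.
case eb: (e b) => [//|p] _.
rewrite (bigD1 b) // [in RHS](bigD1 b) //= eb eqxx subn1 factS mulnA.
by congr (_ * _)%N; apply: eq_bigr => a /negbTE ->; rewrite subn0.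
Qed.

Lemma forall_ord_lift n (m : 'I_n.+1) (P : pred 'I_n.+1) :
  [forall l, P l] = P m && [forall l, P (lift m l)].
Proof.
apply/forallP/andP => [Pl | [Pm /forallP Plift] l]; first by split=> //; apply/forallP.
by case: (unliftP m l) => [l'|] ->.
Qed.

Definition same_multiplicities n (i k : 'I_n -> T) : bool :=
  [forall a, multiplicity k a == multiplicity i a].

Lemma card_rearrangements_rec n (i k : 'I_n.+1 -> T) :
  #|[pred s : 'S_n.+1 | [forall l, i (s l) == k l]]| =
  (\sum_(m | i m == k ord_max)
     #|[pred s : 'S_n | [forall l, i (lift m (s l)) == k (lift ord_max l)]]|)%N.
Proof.
rewrite -sum1_card (partition_big (fun s : 'S_n.+1 => s ord_max) xpredT) //=.
rewrite [RHS]big_mkcond; apply: eq_bigr => m _.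
rewrite big_mkcondl big_lift_perm.
transitivity (\sum_(s : 'S_n)
  ((i m == k ord_max) && [forall l, i (lift m (s l)) == k (lift ord_max l)] : nat))%N.
  apply: eq_bigr => s _; rewrite inE (forall_ord_lift ord_max) lift_perm_id.
  by under eq_forallb => l do rewrite lift_perm_lift.
case: (i m == k ord_max) => /=; last by rewrite big1.
by rewrite -sum1_card [RHS]big_mkcond.
Qed.

Lemma same_multiplicities_lift n (i k : 'I_n.+1 -> T) m :
  i m = k ord_max ->
  same_multiplicities (i \o lift m) (k \o lift ord_max) = same_multiplicities i k.
Proof.
move=> ikm; apply: eq_forallb => a.
by rewrite (multiplicity_lift k ord_max) (multiplicity_lift i m) ikm eqn_add2l.
Qed.

Lemma multiplicity0 (i : 'I_0 -> T) a : multiplicity i a = 0%N.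
Proof. by apply/eqP; rewrite cards_eq0; apply/eqP/setP => -[]. Qed.

Lemma card_rearrangements n (i k : 'I_n -> T) :
  #|[pred s : 'S_n | [forall l, i (s l) == k l]]| =
  if same_multiplicities i k then (\prod_a (multiplicity i a)`!)%N else 0%N.
Proof.
elim: n i k => [|n IHn] i k.
  have -> : same_multiplicities i k by apply/forallP => a; rewrite !multiplicity0.
  rewrite big1 => [|a _]; last by rewrite multiplicity0.
  rewrite -[RHS](card_Sn 0); apply: eq_card => s; rewrite !inE.
  by apply/forallP => -[].
rewrite card_rearrangements_rec; set b := k ord_max.
have [same_ik | /negbTE diff_ik] := boolP (same_multiplicities i k); last first.
  rewrite big1 // => m /eqP ikm.
  by rewrite (IHn (i \o lift m) (k \o lift ord_max)) same_multiplicities_lift ?diff_ik.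
have card_lift m : i m = b ->
    #|[pred s : 'S_n | [forall l, i (lift m (s l)) == k (lift ord_max l)]]| =
    (\prod_a (multiplicity i a - (a == b))`!)%N.
  move=> imb; rewrite (IHn (i \o lift m) (k \o lift ord_max)).
  rewrite same_multiplicities_lift // same_ik; apply: eq_bigr => a _.
  by rewrite (multiplicity_lift i m) imb eq_sym addKn.
under eq_bigr => m /eqP imb do rewrite card_lift //.
rewrite sum_nat_const (@prod_factS (multiplicity i) b).
  by congr (_ * _)%N; apply: eq_card => m; rewrite inE.
by rewrite -(eqP (forallP same_ik b)) (multiplicity_lift k ord_max) eqxx.
Qed.

Lemma sum_perm_rearrange (R : pzSemiRingType) n (i : 'I_n -> T)
    (F : {ffun 'I_n -> T} -> R) :
  \sum_(s : 'S_n) F [ffun l => i (s l)] =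
  (\prod_a (multiplicity i a)`!)%:R *
    \sum_(kappa : {ffun 'I_n -> T} | same_multiplicities i kappa) F kappa.
Proof.
rewrite (partition_big (fun s : 'S_n => [ffun l => i (s l)]) xpredT) //=.
rewrite big_distrr [RHS]big_mkcond /=; apply: eq_bigr => kappa _.
rewrite (eq_bigr (fun=> F kappa)) => [|s /eqP <- //].
have -> : \sum_(s : 'S_n | [ffun l => i (s l)] == kappa) F kappa =
          F kappa *+ #|[pred s : 'S_n | [forall l, i (s l) == kappa l]]|.
  rewrite -sumr_const; apply: eq_bigl => s.
  apply/eqP/forallP => [ik l | ik]; first by rewrite -ik ffunE.
  by apply/ffunP => l; rewrite ffunE; apply/eqP.
by rewrite card_rearrangements -mulr_natl; case: ifP; rewrite ?mul0r.
Qed.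

End Rearrangements.

Section Coboundary.
Variables (R : realType) (r : nat).
Implicit Types (f h : 'rV[R]_r -> R) (x : 'rV[R]_r).
Local Notation D n := (@Dco R r n).

Lemma DcoS n f (gs : 'I_n.+1 -> 'rV[R]_r) x :
  D n.+1 f gs x =
  D n f (gs \o lift ord_max) (x + gs ord_max) - D n f (gs \o lift ord_max) x.
Proof.
have -> : gs \o lift ord_max = fun l => gs (widen_ord (leqnSn n) l).
  by apply/funext => l; congr gs; apply: val_inj; rewrite /= /bump leqNgt ltn_ord.
by [].
Qed.

Lemma Dco_mul_periodic (G : set 'rV[R]_r) n f h gs x :
  Gperiodic G f -> (forall l, G (gs l)) ->
  D n (fun y => f y * h y) gs x = f x * D n h gs x.
Proof.
move=> fG; elim: n gs x => [//|n IHn] gs x gsG.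
have gsG' l : G ((gs \o lift ord_max) l) by apply: gsG.
by rewrite !DcoS !IHn // fG // mulrBr.
Qed.

Lemma Dco_leq_eq0 m n f : (m <= n)%N ->
  (forall gs x, D m f gs x = 0) -> forall gs x, D n f gs x = 0.
Proof.
move=> + f0; elim: n => [|n IHn]; first by rewrite leqn0 => /eqP m0; subst m.
rewrite leq_eqVlt => /predU1P[<- // | ltmn] gs x.
by rewrite DcoS !IHn ?subrr.
Qed.

Section Leibniz.
Variable phi : 'rV[R]_r -> R.
Hypothesis phiD : {morph phi : u v / u + v}.

Lemma Dco_mulr_additive n h gs x :
  D n.+1 (fun y => h y * phi y) gs x =
  phi x * D n.+1 h gs x +
  \sum_(j < n.+1) phi (gs j) * D n h (gs \o lift j) (x + gs j).
Proof.
elim: n gs x => [|n IHn] gs x.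
  by rewrite !DcoS (bigD1_ord ord_max) //= big_ord0 phiD; ring.
have DcoS_lift (j : 'I_n.+1) y :
  D n.+1 h (gs \o lift (lift ord_max j)) y =
  D n h ((gs \o lift ord_max) \o lift j) (y + gs ord_max)
  - D n h ((gs \o lift ord_max) \o lift j) y.
  by rewrite DcoS comp_lift_lift_max /= lift_lift_max.
rewrite DcoS !IHn [in RHS]DcoS [in RHS](bigD1_ord ord_max) // phiD.
under [in RHS]eq_bigr do rewrite DcoS_lift mulrBr (addrAC x).
by rewrite sumrB /=; ring.
Qed.
End Leibniz.

Lemma Dco_monomial n (i : 'I_n -> 'I_r) gs x :
  D n (fun y => \prod_(k < n) y 0 (i k)) gs x =
  permanent (\matrix_(l, k) gs l 0 (i k)).
Proof.
elim: n i gs x => [|n IHn] i gs x.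
  rewrite /= big_ord0 permanent_mxE (eq_bigr (fun=> 1)) => [|s _]; last exact: big_ord0.
  by rewrite sumr_const card_Sn.
have -> : (fun y : 'rV[R]_r => \prod_(k < n.+1) y 0 (i k)) =
          (fun y => (\prod_(k < n) y 0 (i (lift ord_max k))) * y 0 (i ord_max)).
  by apply/funext => y; rewrite (bigD1_ord ord_max) // mulrC.
rewrite Dco_mulr_additive => [|u v]; last by rewrite mxE.
rewrite DcoS !IHn subrr mulr0 add0r (expand_permanent_col _ ord_max).
apply: eq_bigr => j _; rewrite IHn mxE; congr (_ * permanent _).
by apply/matrixP => l k; rewrite !mxE.
Qed.

Lemma Dco_monomial_eq0 m n (i : 'I_m -> 'I_r) gs x : (m < n)%N ->
  D n (fun y => \prod_(k < m) y 0 (i k)) gs x = 0.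
Proof.
move=> ltmn; apply: (Dco_leq_eq0 ltmn) => {}gs {}x.
by rewrite DcoS !Dco_monomial subrr.
Qed.

End Coboundary.

Theorem lemma3p1 (R : realType) (r : nat) (G : set 'rV[R]_r) :
  is_lattice G ->
  (* (a) *)
  (forall (n m : nat) (f : 'rV[R]_r -> R) (i : 'I_m -> 'I_r),
      (m <= n)%N -> continuous f -> Gperiodic G f -> (exists x, f x != 0) ->
      forall gs : 'I_n.+1 -> 'rV[R]_r, (forall l, G (gs l)) ->
      forall x, @Dco R r n.+1 (fun y => f y * \prod_(k < m) y 0 (i k)) gs x = 0)
  /\
  (* (b) *)
  (forall (n : nat) (i : 'I_n -> 'I_r), (1 <= n)%N ->
      forall gs : 'I_n -> 'rV[R]_r, (forall l, G (gs l)) ->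
      (forall x, @Dco R r n (fun y => \prod_(k < n) y 0 (i k)) gs x
                 = \sum_(s : 'S_n) \prod_(l < n) gs l 0 (i (s l)))
      /\
      \sum_(s : 'S_n) \prod_(l < n) gs l 0 (i (s l))
      = (\prod_(k < r) (#|[set l | i l == k]|)`!)%:R *
        \sum_(kappa : {ffun 'I_n -> 'I_r} |
                [forall k, #|[set l | kappa l == k]| == #|[set l | i l == k]|])
           \prod_(l < n) gs l 0 (kappa l)).
Proof.
move=> _; split=> [n m f i lemn _ fG _ gs gsG x | n i _ gs _].
  by rewrite (Dco_mul_periodic _ _ fG gsG) Dco_monomial_eq0 ?mulr0.
split=> [x | ]; first by rewrite Dco_monomial permanent_mxE.
rewrite -(sum_perm_rearrange i (fun kappa => \prod_l gs l 0 (kappa l))).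
by apply: eq_bigr => s _; apply: eq_bigr => l _; rewrite ffunE.
Qed.
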